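(* Let $T$ be a complete theory in a countable language with monster model $\mathfrak{C}$, $\alpha$ a countable ordinal and $C\subseteq\mathfrak{C}^{\alpha}$ an $\equiv_{L}^{\alpha}$-class. If $p\subseteq L_{\alpha}(\mathfrak{C})$ is a partial $C$-proper type, then for every formula $\varphi\in L_{\alpha}(\mathfrak{C})$, either $p\cup\{\varphi\}$ or $p\cup\{\neg\varphi\}$ is $C$-proper.
   Context: $L_{\alpha}(\mathfrak{C})$ denotes formulas in variables $(v_{i})_{i<\alpha}$ with parameters from $\mathfrak{C}$. The Lascar graph on $\mathfrak{C}^{\alpha}$ joins two distinct tuples lying on a common infinite indiscernible sequence (over $\emptyset$); $\equiv_{L}^{\alpha}$ has as classes its connected components. $\operatorname{Aut}f_{L}(\mathfrak{C})$ is the group generated by automorphisms of $\mathfrak{C}$ fixing pointwise some small elementary substructure. For $\varphi(x,a)$ and an automorphism $\sigma$, $\sigma(\varphi)=\varphi(x,\sigma(a))$. $\varphi$ is $C$-generic if finitely many translates $\sigma(\varphi)$, $\sigma\in\operatorname{Aut}f_{L}(\mathfrak{C})$, have a disjunction satisfied by every element of $C$. A partial type $p$ is $C$-proper if there is a non-$C$-generic formula $\psi$ such that $\varphi\vee\psi$ is $C$-generic for every finite conjunction $\varphi$ of formulas of $p$. *)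

From mathcomp Require Import all_boot.
From Stdlib Require Import List Relations.
Import ListNotations.

Set Implicit Arguments.
Unset Strict Implicit.
Unset Printing Implicit Defensive.

Record language := Language {
  Fsym : Type; Rsym : Type;
  farity : Fsym -> nat; rarity : Rsym -> nat }.

Definition countable_language (L : language) : Prop :=
  (exists f : Fsym L -> nat, injective f) /\ (exists g : Rsym L -> nat, injective g).

Record structure (L : language) := Structure {
  dom :> Type;
  interpF : forall f : Fsym L, ('I_(farity f) -> dom) -> dom;
  interpR : forall r : Rsym L, ('I_(rarity r) -> dom) -> Prop }.

Section Syntax.
Variable L : language.

Inductive term (P V : Type) : Type :=
| tvar : V -> term P V
| tpar : P -> term P V
| tapp : forall f : Fsym L, ('I_(farity f) -> term P V) -> term P V.

Inductive form (P : Type) : Type -> Type :=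
| fTrue : forall V, form P V
| fFalse : forall V, form P V
| fEq : forall V, term P V -> term P V -> form P V
| fRel : forall V (r : Rsym L), ('I_(rarity r) -> term P V) -> form P V
| fNot : forall V, form P V -> form P V
| fAnd : forall V, form P V -> form P V -> form P V
| fOr : forall V, form P V -> form P V -> form P V
| fEx : forall V, form P (option V) -> form P V
| fAll : forall V, form P (option V) -> form P V.

Arguments tvar {P V}. Arguments tpar {P V}. Arguments tapp {P V} f args.
Arguments fTrue {P V}. Arguments fFalse {P V}. Arguments fEq {P V}.
Arguments fRel {P V} r args. Arguments fNot {P V}. Arguments fAnd {P V}.
Arguments fOr {P V}. Arguments fEx {P V}. Arguments fAll {P V}.

Fixpoint tmap (P V : Type) (g : P -> P) (t : term P V) : term P V :=
  match t with
  | tvar v => tvar v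
  | tpar a => tpar (g a)
  | tapp f args => tapp f (fun i => tmap g (args i))
  end.

Fixpoint fmap (P : Type) (g : P -> P) (V : Type) (phi : form P V) : form P V :=
  match phi in form _ V0 return form P V0 with
  | fTrue V0 => fTrue
  | fFalse V0 => fFalse
  | fEq V0 t1 t2 => fEq (tmap g t1) (tmap g t2)
  | fRel V0 r args => fRel r (fun i => tmap g (args i))
  | fNot V0 a => fNot (fmap g a)
  | fAnd V0 a b => fAnd (fmap g a) (fmap g b)
  | fOr V0 a b => fOr (fmap g a) (fmap g b)
  | fEx V0 a => fEx (fmap g a)
  | fAll V0 a => fAll (fmap g a)
  end.

Fixpoint tpars_in (P V : Type) (A : P -> Prop) (t : term P V) : Prop :=
  match t with
  | tvar _ => True
  | tpar a => A a
  | tapp f args => forall i, tpars_in A (args i)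
  end.

Fixpoint pars_in (P : Type) (A : P -> Prop) (V : Type) (phi : form P V) : Prop :=
  match phi with
  | fTrue _ | fFalse _ => True
  | fEq _ t1 t2 => tpars_in A t1 /\ tpars_in A t2
  | fRel _ r args => forall i, tpars_in A (args i)
  | fNot _ a => pars_in A a
  | fAnd _ a b | fOr _ a b => pars_in A a /\ pars_in A b
  | fEx _ a | fAll _ a => pars_in A a
  end.

(** * Semantics in a structure [M], formulas with parameters from [M];
    quantifiers relativized to [D] (D = everything gives usual satisfaction;
    for a substructure D this is satisfaction in the induced substructure). *)
Variable M : structure L.

Fixpoint teval (V : Type) (e : V -> M) (t : term M V) : M :=
  match t with
  | tvar v => e v
  | tpar a => a
  | tapp f args => interpF (fun i => teval e (args i))
  end.

Definition oext (V : Type) (e : V -> M) (x : M) : option V -> M :=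
  fun o => match o with Some v => e v | None => x end.

Fixpoint satR (D : M -> Prop) (V : Type) (phi : form M V) {struct phi}
  : (V -> M) -> Prop :=
  match phi in form _ V0 return (V0 -> M) -> Prop with
  | fTrue _ => fun _ => True
  | fFalse _ => fun _ => False
  | fEq _ t1 t2 => fun e => teval e t1 = teval e t2
  | fRel _ r args => fun e => interpR (fun i => teval e (args i))
  | fNot _ a => fun e => ~ satR D a e
  | fAnd _ a b => fun e => satR D a e /\ satR D b e
  | fOr _ a b => fun e => satR D a e \/ satR D b e
  | fEx _ a => fun e => exists x, D x /\ satR D a (oext e x)
  | fAll _ a => fun e => forall x, D x -> satR D a (oext e x)
  end.

Definition sat (V : Type) (e : V -> M) (phi : form M V) : Prop :=
  satR (fun _ => True) phi e.

Definition noenv : Empty_set -> M := fun v => match v with end.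

Definition is_aut (s : M -> M) : Prop :=
  (exists t : M -> M, (forall x, t (s x) = x) /\ (forall x, s (t x) = x)) /\
  (forall f (args : 'I_(farity f) -> M), s (interpF args) = interpF (fun i => s (args i))) /\
  (forall r (args : 'I_(rarity r) -> M), interpR args <-> interpR (fun i => s (args i))).

(** |A| < |M| (kappa = |M|): M does not inject into A *)
Definition small (A : M -> Prop) : Prop :=
  ~ exists g : M -> M, injective g /\ forall x, A (g x).

Definition uncountable_model : Prop := ~ exists f : M -> nat, injective f.

(** kappa-saturation, kappa = |M|: every finitely satisfiable set of
    formulas in one variable over a small set is realized *)
Definition saturated : Prop :=
  forall (A : M -> Prop), small A ->
  forall q : form M unit -> Prop,
    (forall phi, q phi -> pars_in A phi) ->
    (forall l : list (form M unit), (forall phi, In phi l -> q phi) ->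
       exists x, forall phi, In phi l -> sat (fun _ => x) phi) ->
    exists x, forall phi, q phi -> sat (fun _ => x) phi.

Definition strongly_homogeneous : Prop :=
  forall (A : M -> Prop), small A -> forall f : M -> M,
    (forall phi : form M Empty_set, pars_in A phi ->
       (sat noenv phi <-> sat noenv (fmap f phi))) ->
    exists s, is_aut s /\ forall x, A x -> s x = f x.

Definition monster : Prop :=
  uncountable_model /\ saturated /\ strongly_homogeneous.

Definition elem_substructure (N : M -> Prop) : Prop :=
  (exists x, N x) /\
  (forall f (args : 'I_(farity f) -> M), (forall i, N (args i)) -> N (interpF args)) /\
  (forall phi : form M Empty_set, pars_in N phi ->
     (satR N phi noenv <-> sat noenv phi)).

Definition fixes_small_elem (s : M -> M) : Prop :=
  is_aut s /\ exists N, small N /\ elem_substructure N /\ forall x, N x -> s x = x.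

Inductive autf : (M -> M) -> Prop :=
| autf_gen : forall s, fixes_small_elem s -> autf s
| autf_id : forall s, (forall x, s x = x) -> autf s
| autf_comp : forall s t u, autf s -> autf t -> (forall x, u x = s (t x)) -> autf u
| autf_inv : forall s t, autf s -> (forall x, t (s x) = x) -> (forall x, s (t x) = x) -> autf t.

Variable I : Type.

Definition increasing n (u : 'I_n -> nat) : Prop :=
  forall i j : 'I_n, (i < j)%N -> (u i < u j)%N.

Definition indiscernible (s : nat -> I -> M) : Prop :=
  forall n (phi : form M ('I_n * I)%type), pars_in (fun _ => False) phi ->
  forall u w : 'I_n -> nat, increasing u -> increasing w ->
    (sat (fun p => s (u p.1) p.2) phi <-> sat (fun p => s (w p.1) p.2) phi).

Definition lascar_edge (a b : I -> M) : Prop :=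
  a <> b /\ exists s, indiscernible s /\ exists i j, s i = a /\ s j = b.

Definition lascar_eq : relation (I -> M) := clos_refl_sym_trans _ lascar_edge.

Definition lascar_class (C : (I -> M) -> Prop) : Prop :=
  exists a, forall c, C c <-> lascar_eq a c.

Definition c_generic (C : (I -> M) -> Prop) (phi : form M I) : Prop :=
  exists l : list (M -> M), (forall s, In s l -> autf s) /\
    forall c, C c -> exists s, In s l /\ sat c (fmap s phi).

Definition bigAnd (l : list (form M I)) : form M I := fold_right (@fAnd M I) (@fTrue M I) l.

Definition c_proper (C : (I -> M) -> Prop) (p : form M I -> Prop) : Prop :=
  exists psi, ~ c_generic C psi /\
    forall l, (forall phi, In phi l -> p phi) -> c_generic C (fOr (bigAnd l) psi).

Definition partial_type (p : form M I -> Prop) : Prop :=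
  forall l, (forall phi, In phi l -> p phi) -> exists c, sat c (bigAnd l).

Definition add_form (p : form M I -> Prop) (phi : form M I) : form M I -> Prop :=
  fun f => p f \/ f = phi.

End Syntax.

(* If both extensions failed to be C-proper, take a witness psi of the properness
   of p.  Failure for p + phi yields finitely many l1 from p + phi with
   /\l1 \/ psi non-generic, and failure for p + ~phi, tested against this new
   witness, yields l2 from p + ~phi with /\l2 \/ /\l1 \/ psi non-generic.  But
   every translate of /\l \/ psi, where l collects the members of l1, l2 lying
   in p, implies the same translate of that formula (case on phi), and
   genericity is inherited along such implications: a contradiction. *)
From mathcomp Require Import all_boot.
From Stdlib Require Import List Classical.
Import ListNotations.

Lemma exists_sublist_of_pred {A : Type} (P : A -> Prop) (k : list A) :
  exists l, (forall x, In x l -> P x) /\ (forall x, In x k -> P x -> In x l).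
Proof.
  induction k as [|a k [l [HlP Hkl]]].
  - exists []; split; intros x [].
  - destruct (classic (P a)) as [Pa|nPa].
    + exists (a :: l); split.
      * intros x [<-|Hx]; auto.
      * intros x [<-|Hx] Px; simpl; auto.
    + exists l; split; auto.
      intros x [<-|Hx] Px; [contradiction|auto].
Qed.

Section Genericity.
Context {L : language} {M : structure L} {I : Type}.
Context {C : (I -> M) -> Prop}.

Lemma sat_fmap_bigAnd (c : I -> M) (s : M -> M) (l : list (form L M I)) :
  sat c (fmap s (bigAnd l)) <-> forall x, In x l -> sat c (fmap s x).
Proof.
  induction l as [|a l IH]; simpl.
  - split; [intros _ x []|intros; exact Logic.I].
  - change (sat c (fmap s a) /\ sat c (fmap s (bigAnd l)) <->
            (forall x, a = x \/ In x l -> sat c (fmap s x))).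
    rewrite IH; split.
    + intros [Ha Hl] x [<-|Hx]; auto.
    + intros H; split; auto.
Qed.

Lemma c_generic_impl (phi psi : form L M I) :
  (forall s c, autf s -> C c -> sat c (fmap s phi) -> sat c (fmap s psi)) ->
  c_generic C phi -> c_generic C psi.
Proof.
  intros Himpl [ls [Hls Hcover]].
  exists ls; split; auto.
  intros c Cc; destruct (Hcover c Cc) as [s [Hs Hsat]].
  exists s; split; auto.
Qed.

Lemma not_c_proper_witness {q : form L M I -> Prop} {psi : form L M I} :
  ~ c_proper C q -> ~ c_generic C psi ->
  exists l, (forall x, In x l -> q x) /\ ~ c_generic C (fOr (bigAnd l) psi).
Proof.
  intros Hq Hpsi; apply NNPP; intros Hnone.
  apply Hq; exists psi; split; auto.
  intros l Hl; apply NNPP; intros Hl'; apply Hnone; exists l; auto.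
Qed.

(* The translate by s is irrelevant here: fmap s commutes with fNot. *)
Lemma sat_bigAnd_add_form_split {p : form L M I -> Prop} {phi : form L M I}
    {l l1 l2 : list (form L M I)} {c : I -> M} {s : M -> M} :
  (forall x, In x l1 -> add_form p phi x) ->
  (forall x, In x l2 -> add_form p (fNot phi) x) ->
  (forall x, In x (l1 ++ l2) -> p x -> In x l) ->
  sat c (fmap s (bigAnd l)) ->
  sat c (fmap s (bigAnd l2)) \/ sat c (fmap s (bigAnd l1)).
Proof.
  intros Hl1 Hl2 Hl; rewrite !sat_fmap_bigAnd; intros Hsat.
  destruct (classic (sat c (fmap s phi))) as [Hphi|Hphi]; [right|left];
    intros x Hx.
  - destruct (Hl1 x Hx) as [px| ->]; auto.
    apply Hsat, Hl; auto; apply in_or_app; auto.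
  - destruct (Hl2 x Hx) as [px| ->]; auto.
    apply Hsat, Hl; auto; apply in_or_app; auto.
Qed.

Lemma c_proper_add_form {p : form L M I -> Prop} (phi : form L M I) :
  c_proper C p ->
  c_proper C (add_form p phi) \/ c_proper C (add_form p (fNot phi)).
Proof.
  intros [psi [Hpsi Hgen]].
  destruct (classic (c_proper C (add_form p phi))) as [H1|H1]; [now left|].
  right; apply NNPP; intros H2.
  destruct (not_c_proper_witness H1 Hpsi) as [l1 [Hl1 N1]].
  destruct (not_c_proper_witness H2 N1) as [l2 [Hl2 N2]].
  destruct (exists_sublist_of_pred p (l1 ++ l2)) as [l [Hlp Hl]].
  apply N2; apply (c_generic_impl (fOr (bigAnd l) psi)); [|exact (Hgen l Hlp)].
  intros s c _ _ [Hsat|Hsat]; [|now right; right].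
  destruct (sat_bigAnd_add_form_split Hl1 Hl2 Hl Hsat); [left|right; left]; auto.
Qed.

End Genericity.

Theorem lemma4p9 (L : language) (hL : countable_language L)
  (M : structure L) (hM : monster M)
  (I : Type) (hI : exists f : I -> nat, injective f)
  (C : (I -> M) -> Prop) (hC : lascar_class C)
  (p : form L M I -> Prop) (hp_type : partial_type p) (hp : c_proper C p)
  (phi : form L M I) :
  c_proper C (add_form p phi) \/ c_proper C (add_form p (fNot phi)).
Proof.
  exact (c_proper_add_form phi hp).
Qed.
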